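(* Consider any instance of set cover with $n$ elements and $m$ sets with nonnegative costs; let $B\in\mathbb{R}_+$ and $k\in\mathbb{Z}_+$ be values such that (i) for every element, the minimum cost of a set covering it is at least $36\ln m\cdot\frac{B}{k}$, and (ii) for every $k$-subset of elements, the minimum cost of a subfamily covering it is at most $B$. Then the minimum cost of a subfamily covering all elements is at most $O(\log n)\cdot B$.
   Context: Here $O(\log n)\cdot B$ means at most an absolute constant times $\log n\cdot B$, the constant being independent of the instance. *)

From HB Require Import structures.
From mathcomp Require Import all_boot all_order all_algebra.
From mathcomp Require Import reals exp.
Set Implicit Arguments. Unset Strict Implicit. Unset Printing Implicit Defensive.
Import Order.TTheory GRing.Theory Num.Theory.
Local Open Scope ring_scope.

Definition covers (n m : nat) (S : 'I_m -> {set 'I_n}) (F : {set 'I_m})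
    (A : {set 'I_n}) : bool :=
  A \subset \bigcup_(j in F) S j.

Definition fam_cost (R : numDomainType) (m : nat) (c : 'I_m -> R)
    (F : {set 'I_m}) : R :=
  \sum_(j in F) c j.

From HB Require Import structures.
From mathcomp Require Import all_boot all_order all_algebra.
From mathcomp Require Import reals exp.
From mathcomp Require Import zify ring lra.
Set Implicit Arguments. Unset Strict Implicit. Unset Printing Implicit Defensive.
Import Order.TTheory GRing.Theory Num.Theory.

(* Cover greedily in rounds.  While at least [k] elements [U] remain uncovered,
   some family of cost at most [B] covers more than half of [U]: otherwise
   consider the families of cost at most [B] made of nonempty sets.  By (ii)
   every [k]-subset of [U] lies under one of them, and one that covers at most
   half of [U] contains at most a [2 ^ -k] fraction of these subsets, so there
   are at least [2 ^ k] such families.  But by (i) each has fewer than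
   [t = k / (4 ln m)] members, so there are at most [(m + 1) ^ t < 2 ^ k] of
   them.  After about [log2 n] rounds fewer than [k] elements remain, and (ii)
   covers them at cost [B]. *)

Lemma exists_superset_card (T : finType) (U : {set T}) (d : nat) :
  (#|U| <= d <= #|T|)%N -> exists2 A : {set T}, U \subset A & #|A| = d.
Proof.
elim: d => [|d IH] /andP[Ud dT]; first by exists U => //; lia.
have [Ud1|Ud'] := eqVneq #|U| d.+1; first by exists U.
have [|A sUA cA] := IH; first by apply/andP; split; lia.
have /card_gt0P[x] : (0 < #|~: A|)%N by move: (cardsC A); lia.
rewrite inE => xA; exists (x |: A); first exact: subset_trans sUA (subsetUr _ _).
by rewrite cardsU1 xA cA.
Qed.

Lemma card_bigcup_le (T I : finType) (P : {pred I}) (F : I -> {set T}) :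
  (#|\bigcup_(i in P) F i| <= \sum_(i in P) #|F i|)%N.
Proof.
elim/big_rec2: _ => [|i n U _ leUn]; first by rewrite cards0.
by rewrite (leq_trans (leq_card_setU _ _).1) ?leq_add2l.
Qed.

Lemma expn_ffact_leq (a w u k : nat) :
  (a * w <= u)%N -> (a ^ k * w ^_ k <= u ^_ k)%N.
Proof.
move=> awu; elim: k => [|k IH]; first by rewrite !ffactn0.
rewrite !ffactnSr expnSr mulnACA; apply: leq_mul => //.
case: a awu {IH} => [|a] awu; first by rewrite mul0n.
by rewrite mulnBr; have := leq_pmull k (ltn0Sn a); lia.
Qed.

Lemma expn_bin_leq (a w u k : nat) :
  (a * w <= u)%N -> (a ^ k * 'C(w, k) <= 'C(u, k))%N.
Proof.
move=> awu; rewrite -(leq_pmul2r (fact_gt0 k)) -mulnA !bin_ffact.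
exact: expn_ffact_leq.
Qed.

Lemma exp2_leq_card_half_cover (T I : finType) (U : {set T}) (W : I -> {set T})
    (P : {set I}) (k : nat) :
  (k <= #|U|)%N ->
  (forall A : {set T}, A \subset U -> #|A| = k -> exists2 i, i \in P & A \subset W i) ->
  (forall i, i \in P -> 2 * #|U :&: W i| <= #|U|)%N ->
  (2 ^ k <= #|P|)%N.
Proof.
move=> kU coverP halfP.
set D := fun V : {set T} => [set A : {set T} | A \subset V & #|A| == k].
have sub : D U \subset \bigcup_(i in P) D (U :&: W i).
  apply/subsetP => A; rewrite inE => /andP[sAU /eqP cA].
  have [i iP sAW] := coverP A sAU cA.
  by apply/bigcupP; exists i; rewrite // inE subsetI sAU sAW cA /=.
have count : (2 ^ k * 'C(#|U|, k) <= #|P| * 'C(#|U|, k))%N.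
  rewrite -{1}cards_draws -/(D U).
  rewrite (leq_trans (leq_mul (leqnn _) (subset_leq_card sub))) //.
  rewrite (leq_trans (leq_mul (leqnn _) (card_bigcup_le _ _))) //.
  rewrite big_distrr -sum_nat_const leq_sum // => i iP.
  by rewrite cards_draws expn_bin_leq ?halfP.
by rewrite leq_pmul2r ?bin_gt0 in count.
Qed.

Lemma card_small_sets (I : finType) (P : {set {set I}}) (t : nat) :
  (forall F, F \in P -> #|F| <= t)%N -> (#|P| <= #|I|.+1 ^ t)%N.
Proof.
move=> smallP.
pose set_of (s : t.-tuple (option I)) := [set x | Some x \in (s : seq _)].
have -> : (#|I|.+1 ^ t = #|[set: t.-tuple (option I)]|)%N.
  by rewrite cardsT card_tuple card_option.
apply: leq_trans (leq_imset_card set_of _); apply: subset_leq_card.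
apply/subsetP => F FP.
have sz : size (map Some (enum F) ++ nseq (t - #|F|) None) == t.
  by rewrite size_cat size_map size_nseq -cardE; have := smallP F FP; lia.
apply/imsetP; exists (Tuple sz); first by rewrite inE.
apply/setP => x; rewrite inE /= mem_cat mem_nseq andbF orbF.
by rewrite (mem_map (@Some_inj _)) mem_enum.
Qed.

Local Open Scope ring_scope.

Lemma half_le_ln2 (R : realType) : 2^-1 <= ln (2 : R).
Proof.
have := @le_ln1Dx R (- 2^-1) ltac:(lra).
by rewrite [1 + _](_ : _ = 2^-1 :> R) ?lnV ?posrE; [lra | | field].
Qed.

Lemma ln_natX (R : realType) (a t : nat) : (0 < a)%N ->
  ln ((a ^ t)%:R : R) = t%:R * ln (a%:R).
Proof. by move=> a0; rewrite natrX lnXn ?ltr0n // mulr_natl. Qed.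

Lemma expn_lt_exp2 (R : realType) (m t k : nat) : (2 <= m)%N ->
  4 * t%:R * ln (m%:R : R) < k%:R -> (m.+1 ^ t < 2 ^ k)%N.
Proof.
move=> m2 tk.
rewrite -(ltr_nat R) -ltr_ln ?posrE ?ltr0n ?expn_gt0 // !ln_natX //.
have lnm_ge0 : 0 <= ln (m%:R : R) by rewrite ln_ge0 // ler1n ltnW.
have lnS : ln (m.+1%:R : R) <= 2 * ln (m%:R).
  by rewrite -(ln_natX _ 2) ?ler_ln ?posrE ?ltr0n ?expn_gt0 ?ler_nat; nia.
have t_ge0 : 0 <= (t%:R : R) by [].
have := half_le_ln2 R; have k_ge0 : 0 <= (k%:R : R) by [].
nra.
Qed.

Lemma trunc_log2_le_ln (R : realType) (n : nat) : (0 < n)%N ->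
  (trunc_log 2 n)%:R <= 2 * ln (n%:R : R).
Proof.
move=> n0; set r := trunc_log 2 n.
have : (r%:R : R) * ln 2 <= ln (n%:R).
  by rewrite -ln_natX // ler_ln ?posrE ?ltr0n ?expn_gt0 // ler_nat trunc_logP.
have := half_le_ln2 R; have : 0 <= (r%:R : R) by [].
nra.
Qed.

Lemma fam_cost_subset (R : numDomainType) (m : nat) (c : 'I_m -> R)
    (F G : {set 'I_m}) :
  (forall j, 0 <= c j) -> F \subset G -> fam_cost c F <= fam_cost c G.
Proof.
move=> c_ge0 sFG; rewrite /fam_cost [leRHS](big_setID F) /= (setIidPr sFG).
by rewrite lerDl sumr_ge0.
Qed.

Lemma fam_costU (R : numDomainType) (m : nat) (c : 'I_m -> R)
    (F G : {set 'I_m}) :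
  (forall j, 0 <= c j) -> fam_cost c (F :|: G) <= fam_cost c F + fam_cost c G.
Proof.
move=> c_ge0; rewrite {1}/fam_cost (big_setID F) /= setUK lerD2l.
by rewrite fam_cost_subset // setDUl setDv set0U subsetDl.
Qed.

Lemma card_mul_le_fam_cost (R : numDomainType) (m : nat) (c : 'I_m -> R)
    (F : {set 'I_m}) (a : R) :
  (forall j, j \in F -> a <= c j) -> #|F|%:R * a <= fam_cost c F.
Proof. by move=> aF; rewrite mulr_natl -sumr_const ler_sum. Qed.

Section GreedyCover.

Variables (R : realType) (n m : nat) (S : 'I_m -> {set 'I_n}) (c : 'I_m -> R).
Variables (B : R) (k : nat).
Hypothesis c_ge0 : forall j, 0 <= c j.
Hypothesis k_gt0 : (0 < k)%N.
Hypothesis k_le_n : (k <= n)%N.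
Hypothesis k_cover : forall A : {set 'I_n}, #|A| = k ->
  exists F : {set 'I_m}, covers S F A /\ fam_cost c F <= B.

Local Notation covered F := (\bigcup_(j in F) S j).

Lemma small_cover (U : {set 'I_n}) : (#|U| <= k)%N ->
  exists F : {set 'I_m}, covers S F U /\ fam_cost c F <= B.
Proof.
move=> Uk; have [|A sUA cA] := @exists_superset_card _ U k.
  by rewrite Uk card_ord.
have [F [covA costF]] := k_cover cA.
by exists F; split => //; apply: subset_trans sUA covA.
Qed.

Lemma zero_budget_cover : B = 0 ->
  exists F : {set 'I_m}, covers S F [set: 'I_n] /\ fam_cost c F = 0.
Proof.
move=> B0; exists [set j | c j == 0]; split; last first.
  by rewrite /fam_cost big1 // => j; rewrite inE => /eqP.
apply/subsetP => e _.
have [|F [/subsetP covF costF]] := @small_cover [set e]; first by rewrite cards1.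
have /bigcupP[j jF ejS] := covF e (set11 e).
apply/bigcupP; exists j; rewrite // inE.
have costF0 : fam_cost c F = 0.
  by apply/le_anti/andP; split; [rewrite -B0 | exact: sumr_ge0].
exact/eqP/(psumr_eq0P _ costF0).
Qed.

Lemma single_set_cover : (m <= 1)%N ->
  exists F : {set 'I_m}, covers S F [set: 'I_n] /\ fam_cost c F <= B.
Proof.
move=> m_le1; have [|A _ cA] := @exists_superset_card _ (set0 : {set 'I_n}) k.
  by rewrite cards0 card_ord.
have [F [/subsetP covA costF]] := k_cover cA.
have /card_gt0P[e eA] : (0 < #|A|)%N by rewrite cA.
have /bigcupP[j jF _] := covA e eA.
have FT : F = setT.
  apply/eqP; rewrite eqEcard subsetT cardsT card_ord (leq_trans m_le1) //.
  by apply/card_gt0P; exists j.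
exists F; split => //; apply/subsetP => e' _.
have [|F' [/subsetP covF' _]] := @small_cover [set e']; first by rewrite cards1.
have /bigcupP[j' _ ejS] := covF' e' (set11 e').
by apply/bigcupP; exists j'; rewrite ?FT.
Qed.

Hypothesis B_gt0 : 0 < B.
Hypothesis m_gt1 : (1 < m)%N.
Hypothesis cost_lb : forall (e : 'I_n) (j : 'I_m), e \in S j ->
  36%:R * ln (m%:R : R) * (B / k%:R) <= c j.

Lemma card_cheap_family_lt (F : {set 'I_m}) :
  fam_cost c F <= B -> (forall j, j \in F -> S j != set0) ->
  4 * #|F|%:R * ln (m%:R : R) < k%:R.
Proof.
move=> costF nonemptyF.
have Bk_gt0 : 0 < B / k%:R by rewrite divr_gt0 ?ltr0n.
have : #|F|%:R * (36%:R * ln (m%:R : R)) <= k%:R.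
  rewrite -(ler_pM2r Bk_gt0) [leRHS]mulrCA mulfV ?mulr1 ?pnatr_eq0 -?lt0n // -mulrA.
  apply: le_trans costF; apply: card_mul_le_fam_cost => j /nonemptyF /set0Pn[e].
  exact: cost_lb.
have : 0 <= #|F|%:R * ln (m%:R : R) by rewrite mulr_ge0 // ln_ge0 // ler1n ltnW.
have : 1 <= (k%:R : R) by rewrite ler1n.
lra.
Qed.

Lemma halving_step (U : {set 'I_n}) : (k <= #|U|)%N ->
  exists F : {set 'I_m},
    fam_cost c F <= B /\ (2 * #|U :\: covered F| < #|U|)%N.
Proof.
move=> kU.
suff /existsP[F /andP[costF halfF]] : [exists F : {set 'I_m},
    (fam_cost c F <= B) && (2 * #|U :\: covered F| < #|U|)%N] by exists F.
apply: contraT => /existsPn noF.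
pose NE := [set j | S j != set0].
pose P := [set F : {set 'I_m} | (fam_cost c F <= B) && (F \subset NE)].
have P_cover (A : {set 'I_n}) : A \subset U -> #|A| = k ->
    exists2 F, F \in P & A \subset covered F.
  move=> _ /k_cover[F [/subsetP covA costF]]; exists (F :&: NE).
    by rewrite inE subsetIr (le_trans _ costF) ?fam_cost_subset ?subsetIl.
  apply/subsetP => e /covA/bigcupP[j jF ejS].
  by apply/bigcupP; exists j; rewrite // !inE jF; apply/set0Pn; exists e.
have P_half (F : {set 'I_m}) : F \in P -> (2 * #|U :&: covered F| <= #|U|)%N.
  rewrite inE => /andP[costF _]; move: (noF F); rewrite costF /= -leqNgt.
  move: (cardsID (covered F) U); move: #|U :&: _| #|U :\: _| => a b <-; lia.
have P_large := exp2_leq_card_half_cover kU P_cover P_half.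
have /card_gt0P[F0 F0P] : (0 < #|P|)%N by rewrite (leq_trans _ P_large) ?expn_gt0.
have [Fm FmP Fm_max] := arg_maxnP (fun F : {set 'I_m} => #|F|) F0P.
have P_small := card_small_sets Fm_max; rewrite card_ord in P_small.
have : (m.+1 ^ #|Fm| < 2 ^ k)%N.
  move: (FmP : Fm \in P); rewrite inE => /andP[costFm /subsetP FmNE].
  apply: (expn_lt_exp2 m_gt1); apply: card_cheap_family_lt => // j /FmNE.
  by rewrite inE.
by rewrite ltnNge (leq_trans P_large P_small).
Qed.

Lemma iterated_halving (r : nat) (U : {set 'I_n}) : (#|U| < k * 2 ^ r)%N ->
  exists F : {set 'I_m}, covers S F U /\ fam_cost c F <= r.+1%:R * B.
Proof.
have B_le (t : nat) : B <= t.+1%:R * B by rewrite ler_peMl ?ler1n // ltW.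
elim: r U => [|r IH] U Ukr.
  have [|F [covF costF]] := small_cover (U := U).
    by rewrite expn0 muln1 in Ukr; apply: ltnW.
  by exists F; split; rewrite // (le_trans costF).
have [Uk|kU] := ltnP #|U| k.
  have [F [covF costF]] := small_cover (ltnW Uk).
  by exists F; split; rewrite // (le_trans costF).
have [F1 [costF1 halfF1]] := halving_step kU.
have [|F2 [/subsetP covF2 costF2]] := IH (U :\: covered F1).
  by rewrite expnS mulnCA in Ukr; lia.
exists (F1 :|: F2); split.
  apply/subsetP => e eU; have [/bigcupP[j jF1 ejS]|eF1] := boolP (e \in covered F1).
    by apply/bigcupP; exists j; rewrite // inE jF1.
  have /covF2/bigcupP[j jF2 ejS] : e \in U :\: covered F1 by rewrite inE eF1 eU.
  by apply/bigcupP; exists j; rewrite // inE jF2 orbT.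
rewrite (le_trans (fam_costU _ _ c_ge0)) // -addn1 natrD mulrDl mul1r addrC.
exact: lerD.
Qed.

Lemma greedy_cover : exists F : {set 'I_m},
  covers S F [set: 'I_n] /\ fam_cost c F <= 2%:R * (ln (n%:R : R) + 1) * B.
Proof.
have n_gt0 : (0 < n)%N by apply: leq_trans k_le_n.
set r := trunc_log 2 n.
have [|F [covF costF]] := @iterated_halving r.+1 [set: 'I_n].
  by rewrite cardsT card_ord (leq_trans (trunc_log_ltn n (ltnSn 1))) ?leq_pmull.
exists F; split; rewrite // (le_trans costF) // ler_pM2r //.
have := trunc_log2_le_ln R n_gt0; rewrite -/r -addn2 natrD; lra.
Qed.

End GreedyCover.

Theorem mainTheorem7 :
  exists C : nat,
  forall (R : realType) (n m : nat) (S : 'I_m -> {set 'I_n}) (c : 'I_m -> R)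
         (B : R) (k : nat),
    (forall j, 0 <= c j) ->
    0 <= B ->
    (0 < k)%N ->
    (k <= n)%N ->
    (forall (e : 'I_n) (j : 'I_m), e \in S j ->
        36%:R * ln (m%:R : R) * (B / k%:R) <= c j) ->
    (forall A : {set 'I_n}, #|A| = k ->
        exists F : {set 'I_m}, covers S F A /\ fam_cost c F <= B) ->
    exists F : {set 'I_m}, covers S F [set: 'I_n] /\
      fam_cost c F <= C%:R * (ln (n%:R : R) + 1) * B.
Proof.
exists 2%N => R n m S c B k c_ge0 B_ge0 k_gt0 k_le_n cost_lb k_cover.
have [B0|B_neq0] := eqVneq B 0.
  have [F [covF costF]] := zero_budget_cover c_ge0 k_gt0 k_le_n k_cover B0.
  by exists F; rewrite costF B0 mulr0.
have B_gt0 : 0 < B by rewrite lt_def B_neq0.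
have [m_le1|m_gt1] := leqP m 1.
  have [F [covF costF]] := single_set_cover k_gt0 k_le_n k_cover m_le1.
  exists F; split; rewrite // (le_trans costF) // ler_peMl //.
  have : 0 <= ln (n%:R : R) by rewrite ln_ge0 // ler1n (leq_trans k_gt0).
  lra.
exact: greedy_cover c_ge0 k_gt0 k_le_n k_cover B_gt0 m_gt1 cost_lb.
Qed.
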